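(* Let $n\ge 2$, let $A_1\ldots A_n$ be a regular $n$-gon in the coordinate plane whose center is the origin, and let $f(x)$ be the monic polynomial of degree $n$ whose roots, counted with multiplicity, are the abscissas of $A_1,\ldots,A_n$. Then the coefficients of $x^{n-1},x^{n-3},x^{n-5},\ldots$ in $f(x)$ are all zero, except the constant term when $n$ is odd. *)

From HB Require Import structures.
From mathcomp Require Import all_boot all_order all_algebra.
From mathcomp Require Import all_classical all_reals.
From mathcomp Require Import ereal topology normedtype sequences exp trigo.
Set Implicit Arguments. Unset Strict Implicit. Unset Printing Implicit Defensive.
Import Order.TTheory GRing.Theory Num.Theory.
Local Open Scope ring_scope.

Definition ngon_vertex (R : realType) (n : nat) (r theta : R) (k : nat) : R * R :=
  (r * cos (theta + 2 * pi * k%:R / n%:R),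
   r * sin (theta + 2 * pi * k%:R / n%:R)).

Definition regular_ngon_at_origin (R : realType) (n : nat) (A : 'I_n -> R * R) : Prop :=
  exists (r theta : R), 0 < r /\ forall k : 'I_n, A k = ngon_vertex n r theta k.

Definition abscissa_poly (R : realType) (n : nat) (A : 'I_n -> R * R) : {poly R} :=
  \prod_(k < n) ('X - ((A k).1)%:P).

From HB Require Import structures.
From mathcomp Require Import all_boot all_order all_algebra.
From mathcomp Require Import all_classical all_reals.
From mathcomp Require Import ereal topology normedtype sequences exp trigo.
From mathcomp Require Import ring zify.
Import Order.TTheory GRing.Theory Num.Theory.
Set Implicit Arguments. Unset Strict Implicit. Unset Printing Implicit Defensive.
Local Open Scope ring_scope.

(* For odd m < n, cos^m is
   a combination of cos(j x) with j odd and 0 < j < n, and each cos(j x) sums to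
   zero over the n equispaced angles; hence the odd power sums p_m vanish.
   Newton's identity (n - i) f_i = - sum_(t >= 1) p_t f_(i+t) then kills, by
   descending induction, every coefficient f_i with n - i odd. *)

Lemma deriv_prod_ord (R : comNzRingType) n (F : nat -> {poly R}) :
  (\prod_(i < n) F i)^`() =
  \sum_(i < n) (F i)^`() * \prod_(j < n | j != i :> nat) F j.
Proof.
elim: n => [|n IHn]; first by rewrite !big_ord0 derivC.
have prod_recr i : \prod_(j < n.+1 | j != i :> nat) F j =
    \prod_(j < n | j != i :> nat) F j * (if n != i then F n else 1).
  by rewrite big_mkcond big_ord_recr /= -big_mkcond.
rewrite big_ord_recr derivM IHn mulr_suml [RHS]big_ord_recr /= prod_recr eqxx mulr1.
congr (_ + _).
  by apply: eq_bigr => i _; rewrite prod_recr neq_ltn ltn_ord orbT mulrA.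
by rewrite mulrC; congr (_ * _); apply: eq_bigl => j; rewrite neq_ltn ltn_ord.
Qed.

Lemma coef_cofactor_XsubC (R : comNzRingType) (a : R) (q : {poly R}) N j :
  (size q <= N)%N -> q`_j = \sum_(t < N) a ^+ t * (('X - a%:P) * q)`_(j + t).+1.
Proof.
have telescoped M : \sum_(t < M) a ^+ t * (('X - a%:P) * q)`_(j + t).+1 =
                    q`_j - a ^+ M * q`_(j + M).
  elim: M => [|M IHM]; first by rewrite big_ord0 addn0 expr0 mul1r subrr.
  by rewrite big_ord_recr /= IHM mulrBl coefB coefXM coefCM /= addnS exprSr; ring.
move=> szq; rewrite telescoped [q`_(j + N)]nth_default ?mulr0 ?subr0 //.
by rewrite (leq_trans szq) ?leq_addl.
Qed.

Lemma size_prod_XsubC_ord (R : comNzRingType) n (c : nat -> R) :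
  size (\prod_(k < n) ('X - (c k)%:P)) = n.+1.
Proof. by rewrite size_prod_XsubC [index_enum _]unlock -enumT size_enum_ord. Qed.

Lemma newton_prod_XsubC (R : comNzRingType) n (c : nat -> R) i :
  (\prod_(k < n) ('X - (c k)%:P))`_i.+1 *+ i.+1 =
  \sum_(t < n) (\sum_(k < n) c k ^+ t) * (\prod_(k < n) ('X - (c k)%:P))`_(i + t).+1.
Proof.
set f := \prod_(k < n) _.
have cofactorP (k : 'I_n) :
    ('X - (c k)%:P) * \prod_(j < n | j != k :> nat) ('X - (c j)%:P) = f.
  by rewrite [f](bigD1 k).
have size_cofactor (k : 'I_n) :
    (size (\prod_(j < n | j != k :> nat) ('X - (c j)%:P))%R <= n)%N.
  have := size_prod_XsubC_ord n c; rewrite -/f -(cofactorP k) size_monicM ?monicXsubC //.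
    by rewrite size_XsubC add2n => -[->].
  exact/monic_neq0/monic_prod_XsubC.
rewrite -coef_deriv /f (deriv_prod_ord n (fun k => 'X - (c k)%:P)) coef_sum -/f.
under eq_bigr => k _ do
  rewrite derivXsubC mul1r (coef_cofactor_XsubC (c k) _ (size_cofactor k)) cofactorP.
by rewrite exchange_big; apply: eq_bigr => t _; rewrite mulr_suml.
Qed.

Lemma prod_XsubC_odd_codegree_coef_eq0 (R : numDomainType) n (c : nat -> R) :
  (forall m, odd m -> (m < n)%N -> \sum_(k < n) c k ^+ m = 0) ->
  forall i, (0 < i)%N -> (i < n)%N -> odd (n - i) ->
  (\prod_(k < n) ('X - (c k)%:P))`_i = 0.
Proof.
(* In Newton's identity for f_i, a term p_t f_(i+t) with t > 0 vanishes because
   p_t = 0 when t is odd, and by induction on n - i when t is even. *)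
move=> power_sum_odd i; have [m] := ubnP (n - i).
elim: m i => // m IHm [//|i] lt_ni _ lt_in odd_ni.
set f := \prod_(k < n) _.
have n_gt0 : (0 < n)%N by apply: leq_trans lt_in.
have higher_terms0 :
    \sum_(t < n | t != Ordinal n_gt0) (\sum_(k < n) c k ^+ t) * f`_(i + t).+1 = 0.
  apply: big1 => t; rewrite -val_eqE /= => t_neq0.
  case: (ltnP n (i + t).+1) => [lt_n_it | le_it_n].
    by rewrite nth_default ?mulr0 // size_prod_XsubC_ord.
  case odd_t: (odd t); first by rewrite power_sum_odd ?mul0r.
  rewrite IHm ?mulr0 //; lia.
have := newton_prod_XsubC n c i.
rewrite -/f (bigD1 (Ordinal n_gt0)) //= higher_terms0.
under eq_bigr do rewrite expr0.
rewrite sumr_const card_ord addr0 addn0 -[f`__ *+ _]mulr_natl => /eqP.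
rewrite -subr_eq0 -mulrBl mulf_eq0 subr_eq0.
by rewrite eqr_nat ltn_eqF // => /eqP.
Qed.

Lemma sum_cos_equispaced (R : realType) n (theta : R) a : (0 < a < n)%N ->
  \sum_(k < n) cos (a%:R * (theta + 2 * pi * k%:R / n%:R)) = 0.
Proof.
case/andP=> a_gt0 lt_an; have n_gt0 : (0 < n)%N by apply: ltn_trans lt_an.
have n_neq0 : n%:R != 0 :> R by rewrite pnatr_eq0 -lt0n.
pose alpha : R := a%:R * pi / n%:R.
have sin_alpha_gt0 : 0 < sin alpha.
  apply: sin_gt0_pi; apply/andP; split.
    by rewrite /alpha divr_gt0 ?mulr_gt0 ?ltr0n ?pi_gt0.
  by rewrite /alpha ltr_pdivrMr ?ltr0n // mulrC ltr_pM2l ?pi_gt0 ?ltr_nat.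
(* Multiplied by 2 sin(alpha), the k-th term becomes g (k + 1) - g k, and
   g n = g 0 by 2 pi-periodicity. *)
pose g (k : nat) := sin (a%:R * theta + (2 * k%:R - 1) * alpha).
have telescoping k :
    sin alpha *+ 2 * cos (a%:R * (theta + 2 * pi * k%:R / n%:R)) = g k.+1 - g k.
  have -> : a%:R * (theta + 2 * pi * k%:R / n%:R) = a%:R * theta + 2 * k%:R * alpha.
    by rewrite /alpha; field.
  rewrite /g -(natr1 k).
  have -> : a%:R * theta + (2 * (k%:R + 1) - 1) * alpha =
            (a%:R * theta + 2 * k%:R * alpha) + alpha by ring.
  have -> : a%:R * theta + (2 * k%:R - 1) * alpha =
            (a%:R * theta + 2 * k%:R * alpha) - alpha by ring.
  rewrite sinD sinB; ring.
have : sin alpha *+ 2 * \sum_(k < n) cos (a%:R * (theta + 2 * pi * k%:R / n%:R)) = 0.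
  rewrite mulr_sumr; under eq_bigr do rewrite telescoping.
  rewrite -(big_mkord xpredT (fun k => g k.+1 - g k)) telescope_sumr // /g.
  have -> : a%:R * theta + (2 * n%:R - 1) * alpha =
            a%:R * theta + (2 * 0%:R - 1) * alpha + pi *+ 2 *+ a.
    by rewrite /alpha; field.
  by rewrite periodicn ?subrr //; apply: sinD2pi.
by move/eqP; rewrite mulf_eq0 mulrn_eq0 /= (gt_eqF sin_alpha_gt0) => /eqP.
Qed.

Section PowersOfCosines.
Variables (R : realType) (I : finType) (phi : I -> R) (N : nat).
Hypothesis sum_cos_multiple : forall a, (0 < a < N)%N -> \sum_i cos (a%:R * phi i) = 0.

Lemma sum_cos_pow_mul_cos_eq0 m a : odd (m + a) -> (m + a < N)%N ->
  \sum_i cos (phi i) ^+ m * cos (a%:R * phi i) = 0.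
Proof.
elim: m a => [|m IHm] a odd_ma lt_maN.
  under eq_bigr do rewrite expr0 mul1r.
  by apply: sum_cos_multiple; rewrite lt_maN andbT lt0n; apply: contraTneq odd_ma => ->.
case: a => [|a] in odd_ma lt_maN *.
  rewrite -[RHS](IHm 1); [|lia|lia].
  by apply: eq_bigr => i _; rewrite mul0r cos0 mulr1 mul1r exprSr.
have product_to_sum (x : R) : cos x ^+ m.+1 * cos (a.+1%:R * x) =
    (cos x ^+ m * cos (a.+2%:R * x) + cos x ^+ m * cos (a%:R * x)) / 2.
  have -> : a.+2%:R * x = a.+1%:R * x + x by rewrite -(natr1 a.+1) mulrDl mul1r.
  have -> : a%:R * x = a.+1%:R * x - x by rewrite -(natr1 a) mulrDl mul1r addrK.
  by rewrite cosD cosB exprSr; field.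
under eq_bigr do rewrite product_to_sum.
rewrite -mulr_suml big_split /= !IHm ?addr0 ?mul0r //; lia.
Qed.

Lemma sum_cos_pow_odd_eq0 m : odd m -> (m < N)%N -> \sum_i cos (phi i) ^+ m = 0.
Proof.
move=> odd_m lt_mN; rewrite -[RHS](@sum_cos_pow_mul_cos_eq0 m 0) ?addn0 //.
by apply: eq_bigr => i _; rewrite mul0r cos0 mulr1.
Qed.

End PowersOfCosines.

Theorem mainTheorem11 (R : realType) (n : nat) (A : 'I_n -> R * R) :
  (2 <= n)%N -> regular_ngon_at_origin A ->
  forall i : nat, (0 < i)%N -> (i < n)%N -> odd (n - i) ->
    (abscissa_poly A)`_i = 0.
Proof.
move=> _ [r [theta [_ A_vertex]]].
pose phi (k : nat) : R := theta + 2 * pi * k%:R / n%:R.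
have -> : abscissa_poly A = \prod_(k < n) ('X - (r * cos (phi k))%:P).
  by apply: eq_bigr => k _; rewrite A_vertex.
apply: (@prod_XsubC_odd_codegree_coef_eq0 _ _ (fun k => r * cos (phi k))).
move=> m odd_m lt_mn.
under eq_bigr do rewrite exprMn.
rewrite -mulr_sumr (@sum_cos_pow_odd_eq0 _ _ (fun k : 'I_n => phi k) n) ?mulr0 //.
by move=> a lt_an; apply: sum_cos_equispaced.
Qed.
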